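(* Let $\rho_x=\frac12(I+\vec v_x\cdot\vec\sigma)$, $x=1,\dots,N$, be qubit states with Bloch vectors $\vec v_x\in\mathbb R^3$, $\|\vec v_x\|\le1$, given with equal prior probabilities $1/N$. Let $\lambda^\ast=\sup\{\lambda\ge0:\ \exists\text{ an isometry } g \text{ of }\mathbb R^3 \text{ with } \|g(\lambda\vec v_x)\|\le 1\ \forall x\}$ (the scale of the largest copy, similar to the polytope with vertices $\vec v_x$, that fits in the Bloch ball), and let $r=1/(N\lambda^\ast)$ (with $r=0$ if $\lambda^\ast=\infty$), i.e. $r$ is the ratio of the trace-norm edge lengths of the polytope with vertices $\rho_x/N$ to those of its maximal similar polytope in the Bloch sphere. Then $$P_{\mathrm{guess}}=\frac1N+r .$$
   Context: $\vec\sigma=(X,Y,Z)$ are the Pauli matrices. $P_{\mathrm{guess}}=\max\sum_x\frac1N\mathrm{tr}[M_x\rho_x]$ over qubit POVMs $\{M_x\}_{x=1}^N$ (positive semidefinite operators summing to $I$). For qubits, the trace-norm distance between $\frac12(I+\vec a\cdot\vec\sigma)$-type operators with difference $\frac12(\vec a-\vec b)\cdot\vec\sigma$ equals the Euclidean distance $\|\vec a-\vec b\|$, so ratios of trace-norm edge lengths equal ratios of Euclidean edge lengths of Bloch-vector polytopes. *)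

From HB Require Import structures.
From mathcomp Require Import all_boot all_order all_algebra.
From mathcomp Require Import all_classical all_reals.
From mathcomp Require Import ereal complex.
Set Implicit Arguments. Unset Strict Implicit. Unset Printing Implicit Defensive.
Import Order.TTheory GRing.Theory Num.Theory.
Local Open Scope ring_scope.
Local Open Scope classical_set_scope.

Section QubitDefs.
Variable R : realType.
Local Notation C := (complex R).

Definition enorm (v : 'rV[R]_3) : R := Num.sqrt (\sum_(i < 3) v 0 i ^+ 2).

Definition isometry3 (g : 'rV[R]_3 -> 'rV[R]_3) : Prop :=
  forall a b, enorm (g a - g b) = enorm (a - b).

Definition RtoC (x : R) : C := Complex x 0.

Definition pauliX : 'M[C]_2 := delta_mx 0 1 + delta_mx 1 0.
Definition pauliY : 'M[C]_2 :=
  (Complex 0 (-1)) *: delta_mx 0 1 + (Complex 0 1) *: delta_mx 1 0.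
Definition pauliZ : 'M[C]_2 := delta_mx 0 0 - delta_mx 1 1.

Definition bloch_state (v : 'rV[R]_3) : 'M[C]_2 :=
  (RtoC (1/2)) *: (1%:M + RtoC (v 0 0) *: pauliX + RtoC (v 0 1) *: pauliY
                      + RtoC (v 0 2) *: pauliZ).

Definition adjmx m n (A : 'M[C]_(m, n)) : 'M[C]_(n, m) := (map_mx Num.conj A)^T.

Definition psd (A : 'M[C]_2) : Prop :=
  adjmx A = A /\ forall u : 'cV[C]_2, 0 <= (adjmx u *m A *m u) 0 0.

Definition povm N (M : 'I_N -> 'M[C]_2) : Prop :=
  (forall x, psd (M x)) /\ \sum_(x < N) M x = 1%:M.

Definition success N (M : 'I_N -> 'M[C]_2) (v : 'I_N -> 'rV[R]_3) : C :=
  RtoC (N%:R^-1) * \sum_(x < N) \tr (M x *m bloch_state (v x)).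

Definition is_Pguess N (v : 'I_N -> 'rV[R]_3) (P : R) : Prop :=
  (exists M, povm M /\ success M v = RtoC P) /\
  (forall M, povm M -> success M v <= RtoC P).

Definition fit_scales N (v : 'I_N -> 'rV[R]_3) : set R :=
  [set l | 0 <= l /\ exists g, isometry3 g /\ forall x, enorm (g (l *: v x)) <= 1].

Definition lambda_star N (v : 'I_N -> 'rV[R]_3) : \bar R :=
  ereal_sup (EFin @` fit_scales v).

Definition ratio_r N (v : 'I_N -> 'rV[R]_3) : R :=
  match lambda_star v with
  | EFin l => (N%:R * l)^-1
  | _ => 0
  end.

End QubitDefs.

From HB Require Import structures.
From mathcomp Require Import all_boot all_order all_algebra.
From mathcomp Require Import all_classical all_reals all_analysis.
From mathcomp Require Import complex.
From mathcomp Require Import ring lra.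
Import Order.TTheory GRing.Theory Num.Theory.
Import numFieldNormedType.Exports.
Set Implicit Arguments. Unset Strict Implicit. Unset Printing Implicit Defensive.
Local Open Scope ring_scope.
Local Open Scope classical_set_scope.

(* The guessing probability is governed by the smallest ball B(c, r) enclosing the
   Bloch vectors.  A POVM element written as M_x = (m_x I + a_x . sigma) / 2 is positive
   iff |a_x| <= m_x, and completeness reads sum_x m_x = 2, sum_x a_x = 0; hence
   sum_x tr (M_x rho_x) = 1 + 1/2 sum_x a_x . (v_x - c) <= 1 + r.  The KKT weights mu of
   the smallest ball (c = sum_x mu_x v_x, with mu supported on its boundary sphere) attain
   this bound with M_x = 2 mu_x rho((v_x - c) / r), and the same weights show that an
   isometric copy of lambda v fits in the unit ball iff lambda r <= 1, i.e. lambda* = 1/r.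
   The smallest ball itself is obtained by maximising the variance of the points over
   all probability weights. *)

Section InnerProduct.
Variables (R : rcfType) (n : nat).
Implicit Types (u w : 'rV[R]_n) (k : R).

Definition dot u w := \sum_i u 0 i * w 0 i.
Definition vnorm u := Num.sqrt (dot u u).

Lemma dotC u w : dot u w = dot w u.
Proof. by apply: eq_bigr => i _; rewrite mulrC. Qed.

Lemma dotDl u u' w : dot (u + u') w = dot u w + dot u' w.
Proof. by rewrite /dot -big_split; apply: eq_bigr => i _; rewrite mxE mulrDl. Qed.

Lemma dotZl k u w : dot (k *: u) w = k * dot u w.
Proof. by rewrite /dot mulr_sumr; apply: eq_bigr => i _; rewrite mxE mulrA. Qed.

Lemma dotNl u w : dot (- u) w = - dot u w.
Proof. by rewrite -scaleN1r dotZl mulN1r. Qed.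

Lemma dotBl u u' w : dot (u - u') w = dot u w - dot u' w.
Proof. by rewrite dotDl dotNl. Qed.

Lemma dot0l w : dot 0 w = 0.
Proof. by rewrite /dot big1 // => i _; rewrite mxE mul0r. Qed.

Lemma dotDr u w w' : dot u (w + w') = dot u w + dot u w'.
Proof. by rewrite dotC dotDl !(dotC u). Qed.

Lemma dotZr k u w : dot u (k *: w) = k * dot u w.
Proof. by rewrite dotC dotZl dotC. Qed.

Lemma dotBr u w w' : dot u (w - w') = dot u w - dot u w'.
Proof. by rewrite dotC dotBl !(dotC u). Qed.

Lemma dot0r u : dot u 0 = 0.
Proof. by rewrite dotC dot0l. Qed.

Lemma dot_suml (I : Type) (r : seq I) (P : pred I) (F : I -> 'rV[R]_n) w :
  dot (\sum_(i <- r | P i) F i) w = \sum_(i <- r | P i) dot (F i) w.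
Proof. by elim/big_rec2: _ => [|i a b _ <-]; rewrite ?dot0l ?dotDl. Qed.

Lemma dot_sumr (I : Type) (r : seq I) (P : pred I) (F : I -> 'rV[R]_n) u :
  dot u (\sum_(i <- r | P i) F i) = \sum_(i <- r | P i) dot u (F i).
Proof. by rewrite dotC dot_suml; apply: eq_bigr => i _; rewrite dotC. Qed.

Lemma dot_ge0 u : 0 <= dot u u.
Proof. by apply: sumr_ge0 => i _; rewrite -expr2 sqr_ge0. Qed.

Lemma dot_eq0 u : (dot u u == 0) = (u == 0).
Proof.
apply/eqP/eqP => [u0|->]; last exact: dot0l.
apply/rowP => i; rewrite mxE; apply/eqP.
have /psumr_eq0P/(_ i isT)/eqP := u0; rewrite mulf_eq0 orbb; apply.
by move=> j _; rewrite -expr2 sqr_ge0.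
Qed.

Lemma vnorm_ge0 u : 0 <= vnorm u.
Proof. exact: sqrtr_ge0. Qed.

Lemma vnorm_sqr u : vnorm u ^+ 2 = dot u u.
Proof. by rewrite sqr_sqrtr // dot_ge0. Qed.

Lemma vnormZ k u : vnorm (k *: u) = `|k| * vnorm u.
Proof. by rewrite /vnorm dotZl dotZr mulrA -expr2 sqrtrM ?sqr_ge0 // sqrtr_sqr. Qed.

Lemma vnorm_le u m : (vnorm u <= m) = (0 <= m) && (dot u u <= m ^+ 2).
Proof.
have [m0|m_lt0] := leP 0 m; last by apply/negbTE; rewrite -ltNge (lt_le_trans m_lt0) ?vnorm_ge0.
by rewrite /vnorm -[in LHS](ger0_norm m0) -sqrtr_sqr ler_sqrt ?sqr_ge0.
Qed.

Lemma dot_le_vnorm u w : dot u w <= vnorm u * vnorm w.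
Proof.
have vnorm0 z : vnorm z = 0 -> z = 0.
  by move=> z0; apply/eqP; rewrite -dot_eq0 -vnorm_sqr z0 expr2 mul0r.
have [/vnorm0->|u_neq0] := eqVneq (vnorm u) 0; first by rewrite dot0l mulr_ge0 ?vnorm_ge0.
have [/vnorm0->|w_neq0] := eqVneq (vnorm w) 0; first by rewrite dot0r mulr_ge0 ?vnorm_ge0.
have u_gt0 : 0 < vnorm u by rewrite lt_def u_neq0 vnorm_ge0.
have w_gt0 : 0 < vnorm w by rewrite lt_def w_neq0 vnorm_ge0.
have := dot_ge0 (vnorm w *: u - vnorm u *: w).
rewrite dotBl !dotBr !dotZl !dotZr (dotC w u) -!vnorm_sqr.
have aw_gt0 := mulr_gt0 u_gt0 w_gt0; nra.
Qed.

Section Isometry.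
Variable g : 'rV[R]_n -> 'rV[R]_n.
Hypothesis g_iso : forall u w, vnorm (g u - g w) = vnorm (u - w).

Lemma iso_dot u w : dot (g u - g 0) (g w - g 0) = dot u w.
Proof.
have polar z z' : dot z z' * 2 = dot z z + dot z' z' - dot (z - z') (z - z').
  by rewrite dotBl !dotBr (dotC z' z); ring.
apply: (@mulIf _ 2); first by rewrite pnatr_eq0.
by rewrite !polar opprB addrA subrK -!vnorm_sqr !g_iso !subr0.
Qed.

(* [z |-> g z - g 0] preserves inner products, so it maps the null sum [\sum_i a i]
   to a null sum; this absorbs the translation part of [g]. *)
Lemma iso_pairing_le (I : finType) (a p : I -> 'rV[R]_n) :
  \sum_i a i = 0 -> (forall i, vnorm (g (p i)) <= 1) ->
  \sum_i dot (a i) (p i) <= \sum_i vnorm (a i).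
Proof.
move=> a0 p1; pose h z := g z - g 0.
have h_sum0 : \sum_i h (a i) = 0.
  apply/eqP; rewrite -dot_eq0.
  have -> : dot (\sum_i h (a i)) (\sum_i h (a i)) = dot (\sum_i a i) (\sum_i a i).
    rewrite !dot_suml; apply: eq_bigr => i _; rewrite !dot_sumr.
    by apply: eq_bigr => j _; exact: iso_dot.
  by rewrite a0 dot0l.
have -> : \sum_i dot (a i) (p i) =
    \sum_i dot (h (a i)) (g (p i)) - dot (\sum_i h (a i)) (g 0).
  by rewrite dot_suml -sumrB; apply: eq_bigr => i _; rewrite -dotBr iso_dot.
rewrite h_sum0 dot0l subr0; apply: ler_sum => i _.
apply: (le_trans (dot_le_vnorm _ _)).
rewrite /h g_iso subr0 -[leRHS]mulr1.
by apply: ler_wpM2l; [exact: vnorm_ge0 | exact: p1].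
Qed.

End Isometry.
End InnerProduct.

Lemma continuous_sum (T : topologicalType) (K : numFieldType) (I : Type)
    (r : seq I) (F : I -> T -> K) :
  (forall i, continuous (F i)) -> continuous (fun t => \sum_(i <- r) F i t).
Proof.
move=> Fc; elim: r => [|i r IH].
  by under eq_fun do rewrite big_nil; exact: cst_continuous.
by under eq_fun do rewrite big_cons; move=> t; apply: continuousD; [exact: Fc | exact: IH].
Qed.

Section MinimalBall.
Variables (R : realType) (n N : nat) (v : 'I_N -> 'rV[R]_n).

Definition simplex : set 'rV[R]_N :=
  [set w | (forall x, 0 <= w 0 x) /\ \sum_x w 0 x = 1].

Definition barycenter (w : 'rV[R]_N) : 'rV[R]_n := \sum_x w 0 x *: v x.

Definition variance (w : 'rV[R]_N) : R :=
  \sum_x w 0 x * dot (v x) (v x) - dot (barycenter w) (barycenter w).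

(* The partial derivative of [variance] at [w] in the direction of the x-th vertex. *)
Definition variance_grad (w : 'rV[R]_N) x : R :=
  dot (v x) (v x) - 2 * dot (barycenter w) (v x).

Lemma simplex_compact : compact simplex.
Proof.
have cube : compact [set w : 'rV[R]_N | forall x, `[0, 1]%classic (w ord0 x)].
  by have := @rV_compact R N (fun=> `[0, 1]%classic); apply => _; exact: segment_compact.
apply: (subclosed_compact _ cube).
  have -> : simplex = \bigcap_(x in setT) ((fun w : 'rV[R]_N => w 0 x) @^-1` [set t | 0 <= t])
      `&` ((fun w : 'rV[R]_N => \sum_x w 0 x) @^-1` [set 1]).
    by apply/seteqP; split => w /= [w0 w1]; split => // x; [move=> _|]; exact: w0.
  apply: closedI.
    apply: closed_bigI => x _; apply: preimage_closed; last exact: closed_ge.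
    by move=> w _; exact: coord_continuous.
  apply: preimage_closed; last exact: closed_eq.
  by move=> w _; apply: continuous_sum => x; exact: coord_continuous.
move=> w [w0 w1] x /=; rewrite in_itv /= w0 /= -w1.
by rewrite (bigD1 x) //= lerDl sumr_ge0.
Qed.

Lemma barycenter_coord w k : barycenter w 0 k = \sum_x w 0 x * v x 0 k.
Proof. by rewrite summxE; apply: eq_bigr => x _; rewrite mxE. Qed.

Lemma variance_continuous : continuous variance.
Proof.
have coord x : continuous (fun w : 'rV[R]_N => w 0 x) by move=> w; exact: coord_continuous.
have weighted (F : 'I_N -> R) : continuous (fun w : 'rV[R]_N => \sum_x w 0 x * F x).
  by apply: continuous_sum => x w; apply: continuousM; [exact: coord | exact: cst_continuous].
have bary k : continuous (fun w => barycenter w 0 k).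
  by under eq_fun do rewrite barycenter_coord; exact: weighted.
have bary2 : continuous (fun w => dot (barycenter w) (barycenter w)).
  by apply: continuous_sum => k w; apply: continuousM; exact: bary.
by move=> w; exact: (continuousB (weighted _ w) (bary2 w)).
Qed.

Lemma sum_eq1 x (F : 'I_N -> R) : \sum_z (z == x)%:R * F z = F x.
Proof.
rewrite (bigD1 x) //= eqxx mul1r big1 ?addr0 // => z /negbTE zx.
by rewrite zx mul0r.
Qed.

Lemma sum_eq1Z x (F : 'I_N -> 'rV[R]_n) : \sum_z (z == x)%:R *: F z = F x.
Proof.
rewrite (bigD1 x) //= eqxx scale1r big1 ?addr0 // => z /negbTE zx.
by rewrite zx scale0r.
Qed.

Section Transfer.
Variables (w : 'rV[R]_N) (x y : 'I_N) (t : R).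

Definition transfer : 'rV[R]_N := \row_z (w 0 z + t * ((z == x)%:R - (z == y)%:R)).

Lemma transfer_sum (F : 'I_N -> R) :
  \sum_z transfer 0 z * F z = \sum_z w 0 z * F z + t * (F x - F y).
Proof.
under eq_bigr do rewrite mxE mulrDl -mulrA mulrBl.
by rewrite big_split /= -mulr_sumr sumrB !sum_eq1.
Qed.

Lemma barycenter_transfer : barycenter transfer = barycenter w + t *: (v x - v y).
Proof.
rewrite /barycenter; under eq_bigr do rewrite mxE scalerDl -scalerA scalerBl.
by rewrite big_split /= -scaler_sumr sumrB !sum_eq1Z.
Qed.

Lemma variance_transfer : variance transfer =
  variance w + t * (variance_grad w x - variance_grad w y) - t ^+ 2 * dot (v x - v y) (v x - v y).
Proof.
rewrite /variance /variance_grad transfer_sum barycenter_transfer.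
rewrite !dotBl !dotBr !dotDl !dotDr !dotZl !dotZr !dotBl !dotBr.
by rewrite (dotC (v x) (barycenter w)) (dotC (v y) (barycenter w)) (dotC (v y) (v x)); ring.
Qed.

End Transfer.

Lemma variance_max_grad w : simplex w ->
    (forall w', simplex w' -> variance w' <= variance w) ->
  forall x y, 0 < w 0 y -> variance_grad w x <= variance_grad w y.
Proof.
move=> [w0 w1] wmax x y wy; rewrite leNgt; apply/negP => lt_yx.
set d := variance_grad w x - variance_grad w y.
have d_gt0 : 0 < d by rewrite subr_gt0.
set D := dot (v x - v y) (v x - v y).
have D_ge0 : 0 <= D := dot_ge0 _.
(* a transfer of size [t <= d / (2 (D + 1))] increases the variance *)
set t := Order.min (w 0 y) (d / (2 * (D + 1))).
have t_gt0 : 0 < t by rewrite lt_min wy divr_gt0 //; lra.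
have t_le_wy : t <= w 0 y by rewrite ge_min lexx.
have t_le : t * (2 * (D + 1)) <= d.
  by rewrite -ler_pdivlMr ?ge_min ?lexx ?orbT //; lra.
have xy : x != y by apply: contraTneq d_gt0 => exy; rewrite /d exy subrr ltxx.
have : simplex (transfer w x y t).
  split; last first.
    have := transfer_sum w x y t (fun=> 1).
    by rewrite subrr mulr0 addr0 !(eq_bigr _ (fun z _ => mulr1 _)) w1.
  move=> z; rewrite mxE; have := w0 z.
  case: (eqVneq z y) => [->|_]; [rewrite eq_sym (negbTE xy) | case: (z == x)];
    rewrite /= ?mulr1n ?mulr0n; lra.
move/wmax; rewrite variance_transfer -/d -/D; nra.
Qed.

(* The KKT conditions characterising the smallest ball enclosing the points [v x]:
   its center is a [mu]-barycenter, and [mu] only charges points on its boundary. *)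
Definition minball_cert (mu : 'I_N -> R) (c : 'rV[R]_n) (r : R) : Prop :=
  [/\ forall x, 0 <= mu x, \sum_x mu x = 1, c = \sum_x mu x *: v x,
      forall x, vnorm (v x - c) <= r
    & forall x, 0 < mu x -> vnorm (v x - c) = r].

(* The certificate comes from a maximiser of the variance over the simplex. *)
Lemma minball_exists : (0 < N)%N -> exists mu c r, minball_cert mu c r.
Proof.
move=> N_gt0; pose x0 := Ordinal N_gt0.
have simplex_x0 : simplex (\row_z (z == x0)%:R).
  split => [z|]; first by rewrite mxE ler0n.
  by rewrite -[RHS](sum_eq1 x0 (fun=> 1)); apply: eq_bigr => z _; rewrite mxE mulr1.
have [w /set_mem w_simplex w_max] : exists2 w, w \in simplex &
    forall w', w' \in simplex -> variance w' <= variance w.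
  apply: compact_EVT_max; [by exists (\row_z (z == x0)%:R) | exact: simplex_compact |].
  exact: continuous_subspaceT variance_continuous.
have {}w_max w' : simplex w' -> variance w' <= variance w by move/mem_set; exact: w_max.
have grad_le := variance_max_grad w_simplex w_max.
case: (w_simplex) => w_ge0 w_sum1.
have [y /= wy] : exists y, true && (0 < w 0 y).
  apply: psumr_neq0P => [z _|]; first exact: w_ge0.
  by rewrite w_sum1; apply/eqP; exact: oner_neq0.
have distE z : dot (v z - barycenter w) (v z - barycenter w) =
    variance_grad w z + dot (barycenter w) (barycenter w).
  by rewrite /variance_grad !dotBl !dotBr (dotC (v z)); ring.
exists (fun z => w 0 z), (barycenter w), (vnorm (v y - barycenter w)); split => //.
- by move=> z; rewrite /vnorm ler_sqrt ?dot_ge0 // !distE lerD2r grad_le.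
- move=> z wz; rewrite /vnorm !distE; congr (Num.sqrt (_ + _)).
  by apply/eqP; rewrite eq_le !grad_le.
Qed.

Section MinballCert.
Variables (mu : 'I_N -> R) (c : 'rV[R]_n) (r : R).
Hypothesis cert : minball_cert mu c r.

Lemma minball_radius_ge0 : (0 < N)%N -> 0 <= r.
Proof.
move=> N_gt0; case: cert => _ _ _ le_r _.
exact: le_trans (vnorm_ge0 _) (le_r (Ordinal N_gt0)).
Qed.

Lemma minball_balanced : \sum_x mu x *: (v x - c) = 0.
Proof.
case: cert => _ mu1 cE _ _; under eq_bigr do rewrite scalerBr.
by rewrite sumrB -scaler_suml mu1 scale1r -cE subrr.
Qed.

Lemma minball_moment : \sum_x mu x * dot (v x - c) (v x) = r ^+ 2.
Proof.
case: cert => mu_ge0 mu1 _ _ on_sphere.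
have -> : \sum_x mu x * dot (v x - c) (v x) =
    \sum_x mu x * dot (v x - c) (v x - c) + dot (\sum_x mu x *: (v x - c)) c.
  by rewrite dot_suml -big_split; apply: eq_bigr => x _ /=; rewrite dotBr dotZl; ring.
rewrite minball_balanced dot0l addr0 -[RHS]mul1r -mu1 mulr_suml.
apply: eq_bigr => x _; have [mu_gt0|mu_le0] := ltrP 0 (mu x).
  by rewrite -vnorm_sqr on_sphere.
have -> : mu x = 0 by apply/eqP; rewrite eq_le mu_le0 mu_ge0.
by rewrite !mul0r.
Qed.

Lemma minball_scale_le (g : 'rV[R]_n -> 'rV[R]_n) (l : R) :
  (forall u w, vnorm (g u - g w) = vnorm (u - w)) ->
  (forall x, vnorm (g (l *: v x)) <= 1) -> l * r <= 1.
Proof.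
move=> g_iso fit; case: (cert) => mu_ge0 mu1 _ le_r _.
have := iso_pairing_le g_iso minball_balanced fit.
under eq_bigr do rewrite dotZl dotZr mulrCA.
rewrite -mulr_sumr minball_moment => le_sum.
have sum_le_r : \sum_x vnorm (mu x *: (v x - c)) <= r.
  rewrite -[leRHS]mul1r -mu1 mulr_suml; apply: ler_sum => x _.
  by rewrite vnormZ ger0_norm // ler_wpM2l.
have r_ge0 : 0 <= r := le_trans (sumr_ge0 _ (fun x _ => vnorm_ge0 _)) sum_le_r.
have := le_trans le_sum sum_le_r.
have [->|r_neq0] := eqVneq r 0; first by rewrite mulr0 ler01.
rewrite expr2 mulrA => lrr_le_r.
have r_gt0 : 0 < r by rewrite lt_def r_neq0 r_ge0.
by rewrite -(ler_pM2r r_gt0) mul1r.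
Qed.

End MinballCert.
End MinimalBall.

Section HermitianForm2.
Variable R : realFieldType.

(* [hform2 p s a b x1 x2 y1 y2] is [u^* H u] for [H = [[p, q], [q^*, s]]] with
   [q = a + i b] and [u = (x1 + i x2, y1 + i y2)]. *)
Definition hform2 (p s a b x1 x2 y1 y2 : R) : R :=
  p * (x1 ^+ 2 + x2 ^+ 2) + s * (y1 ^+ 2 + y2 ^+ 2)
  + 2 * (x1 * (a * y1 - b * y2) + x2 * (a * y2 + b * y1)).

Lemma hform2_ge0P p s a b :
  (forall x1 x2 y1 y2, 0 <= hform2 p s a b x1 x2 y1 y2) <->
  [/\ 0 <= p, 0 <= s & a ^+ 2 + b ^+ 2 <= p * s].
Proof.
split => [H|[p_ge0 s_ge0 q_le] x1 x2 y1 y2].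
  have p_ge0 : 0 <= p by have := H 1 0 0 0; rewrite /hform2; lra.
  have s_ge0 : 0 <= s by have := H 0 0 1 0; rewrite /hform2; lra.
  split => //; set K := a ^+ 2 + b ^+ 2.
  have [s_gt0|s_le0] := ltrP 0 s.
    have := H s 0 (- a) b.
    have -> : hform2 p s a b s 0 (- a) b = s * (p * s - K) by rewrite /hform2 /K; ring.
    by rewrite pmulr_rge0 // subr_ge0.
  have s0 : s = 0 by apply/eqP; rewrite eq_le s_le0 s_ge0.
  have := H K 0 (- ((p + 1) * a)) ((p + 1) * b).
  have -> : hform2 p s a b K 0 (- ((p + 1) * a)) ((p + 1) * b) = - ((p + 2) * K ^+ 2).
    by rewrite /hform2 s0 /K; ring.
  have K_ge0 : 0 <= K by rewrite addr_ge0 ?sqr_ge0.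
  rewrite s0 mulr0 oppr_ge0 => K_le0; nra.
have [p_gt0|p_le0] := ltrP 0 p.
  rewrite -(pmulr_rge0 _ p_gt0).
  have -> : p * hform2 p s a b x1 x2 y1 y2 =
    (p * x1 + a * y1 - b * y2) ^+ 2 + (p * x2 + a * y2 + b * y1) ^+ 2
    + (p * s - (a ^+ 2 + b ^+ 2)) * (y1 ^+ 2 + y2 ^+ 2) by rewrite /hform2; ring.
  by rewrite !addr_ge0 ?sqr_ge0 // mulr_ge0 ?subr_ge0 ?addr_ge0 ?sqr_ge0.
have p0 : p = 0 by apply/eqP; rewrite eq_le p_le0 p_ge0.
rewrite p0 mul0r in q_le.
have a0 : a = 0 by nra.
have b0 : b = 0 by nra.
by rewrite /hform2 p0 a0 b0; nra.
Qed.

End HermitianForm2.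

Lemma mx2P (T : Type) (A B : 'M[T]_2) :
  A 0 0 = B 0 0 -> A 0 1 = B 0 1 -> A 1 0 = B 1 0 -> A 1 1 = B 1 1 -> A = B.
Proof.
have ord2 (i : 'I_2) : i = 0 \/ i = 1 by case: i => [[|[|//]] ?]; [left|right]; exact: val_inj.
move=> e00 e01 e10 e11; apply/matrixP => i j.
by case: (ord2 i) => ->; case: (ord2 j) => ->.
Qed.

Lemma sum_ord3 (T : nmodType) (F : 'I_3 -> T) : \sum_i F i = F 0 + F 1 + F 2.
Proof.
rewrite !big_ord_recr big_ord0 /= add0r.
by congr (F _ + F _ + F _); exact: val_inj.
Qed.

Lemma dot3E (R : rcfType) (u w : 'rV[R]_3) :
  dot u w = u 0 0 * w 0 0 + u 0 1 * w 0 1 + u 0 2 * w 0 2.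
Proof. exact: sum_ord3. Qed.

HB.lock Definition pauli_mx (R : realType) (m : R) (a : 'rV[R]_3) : 'M[complex R]_2 :=
  RtoC (1/2) *: (RtoC m *: 1%:M + RtoC (a 0 0) *: pauliX R + RtoC (a 0 1) *: pauliY R
                 + RtoC (a 0 2) *: pauliZ R).

Section PauliMatrices.
Variable R : realType.
Local Notation C := (complex R).
Implicit Types (m : R) (a w : 'rV[R]_3).

Lemma complexP (z z' : C) :
  complex.Re z = complex.Re z' -> complex.Im z = complex.Im z' -> z = z'.
Proof. by case: z z' => ? ? [? ?] /= -> ->. Qed.

(* The coordinates [m] and [a] of a Hermitian [M = pauli_mx m a], read off its entries. *)
Definition htrace (M : 'M[C]_2) : R := complex.Re (M 0 0) + complex.Re (M 1 1).

Definition hbloch (M : 'M[C]_2) : 'rV[R]_3 := \row_i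
  [:: 2 * complex.Re (M 0 1); - (2 * complex.Im (M 0 1));
      complex.Re (M 0 0) - complex.Re (M 1 1)]`_i.

Lemma bloch_stateE w : bloch_state w = pauli_mx 1 w.
Proof. by rewrite pauli_mx.unlock scale1r. Qed.

Lemma pauli_mx00 m a : pauli_mx m a 0 0 = Complex ((m + a 0 2) / 2) 0.
Proof. by apply: complexP; rewrite pauli_mx.unlock !mxE /=; ring. Qed.

Lemma pauli_mx01 m a : pauli_mx m a 0 1 = Complex (a 0 0 / 2) (- (a 0 1 / 2)).
Proof. by apply: complexP; rewrite pauli_mx.unlock !mxE /=; ring. Qed.

Lemma pauli_mx10 m a : pauli_mx m a 1 0 = Complex (a 0 0 / 2) (a 0 1 / 2).
Proof. by apply: complexP; rewrite pauli_mx.unlock !mxE /=; ring. Qed.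

Lemma pauli_mx11 m a : pauli_mx m a 1 1 = Complex ((m - a 0 2) / 2) 0.
Proof. by apply: complexP; rewrite pauli_mx.unlock !mxE /=; ring. Qed.

Lemma pauli_mxD m m' a a' : pauli_mx m a + pauli_mx m' a' = pauli_mx (m + m') (a + a').
Proof.
by apply: mx2P; rewrite [LHS]mxE ?pauli_mx00 ?pauli_mx01 ?pauli_mx10 ?pauli_mx11;
  apply: complexP; rewrite /= ?mxE; ring.
Qed.

Lemma pauli_mx_sum (I : Type) (r : seq I) (m : I -> R) (a : I -> 'rV[R]_3) :
  \sum_(i <- r) pauli_mx (m i) (a i) = pauli_mx (\sum_(i <- r) m i) (\sum_(i <- r) a i).
Proof.
elim: r => [|i r IH]; last by rewrite !big_cons IH pauli_mxD.
rewrite !big_nil; apply: mx2P; rewrite ?pauli_mx00 ?pauli_mx01 ?pauli_mx10 ?pauli_mx11;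
  by apply: complexP; rewrite /= ?mxE; ring.
Qed.

Lemma pauli_mx_id : pauli_mx (2 : R) 0 = 1%:M.
Proof.
by apply: mx2P; rewrite ?pauli_mx00 ?pauli_mx01 ?pauli_mx10 ?pauli_mx11;
  apply: complexP; rewrite /= ?mxE /=; field.
Qed.

Lemma htrace_pauli_mx m a : htrace (pauli_mx m a) = m.
Proof. by rewrite /htrace pauli_mx00 pauli_mx11 /=; field. Qed.

Lemma hbloch_pauli_mx m a : hbloch (pauli_mx m a) = a.
Proof.
apply/rowP => i; have : [\/ i = 0, i = 1 | i = 2].
  by case: i => [[|[|[|//]]] ?]; [constructor 1 | constructor 2 | constructor 3]; exact: val_inj.
by case=> ->; rewrite mxE /= ?pauli_mx00 ?pauli_mx01 ?pauli_mx11 /=; field.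
Qed.

Lemma adjmxE (p q : nat) (A : 'M[C]_(p, q)) i j : adjmx A i j = Num.conj (A j i).
Proof. by rewrite !mxE. Qed.

Lemma conjc_Complex (x y : R) : Num.conj (Complex x y) = Complex x (- y).
Proof. by []. Qed.

Lemma adjmx_pauli_mx m a : adjmx (pauli_mx m a) = pauli_mx m a.
Proof.
apply: mx2P; rewrite adjmxE ?pauli_mx00 ?pauli_mx01 ?pauli_mx10 ?pauli_mx11;
  by rewrite conjc_Complex ?opprK ?oppr0.
Qed.

Lemma hermitian_pauli_mx M : adjmx M = M -> M = pauli_mx (htrace M) (hbloch M).
Proof.
move=> herm; have conjM i j : Num.conj (M j i) = M i j by rewrite -[in RHS]herm adjmxE.
have imM i : complex.Im (M i i) = 0.
  move: (conjM i i); case: (M i i) => x y.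
  by rewrite conjc_Complex => /(congr1 (@complex.Im R)) /=; lra.
have [re10 im10] : complex.Re (M 1 0) = complex.Re (M 0 1) /\
    complex.Im (M 1 0) = - complex.Im (M 0 1) by rewrite -conjM; case: (M 0 1).
by apply: mx2P; rewrite ?pauli_mx00 ?pauli_mx01 ?pauli_mx10 ?pauli_mx11 /htrace /hbloch;
  apply: complexP; rewrite ?imM ?re10 ?im10 !mxE /=; field.
Qed.

Lemma tr_mulmx2 (T : comPzRingType) (A B : 'M[T]_2) :
  \tr (A *m B) = A 0 0 * B 0 0 + A 0 1 * B 1 0 + (A 1 0 * B 0 1 + A 1 1 * B 1 1).
Proof.
rewrite /mxtrace !big_ord_recr big_ord0 /= add0r !mxE !big_ord_recr !big_ord0 /= !add0r.
have -> : widen_ord (leqnSn 1) ord_max = 0 :> 'I_2 by exact: val_inj.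
by have -> : (ord_max : 'I_2) = 1 by exact: val_inj.
Qed.

Lemma tr_pauli_mx m a w : \tr (pauli_mx m a *m pauli_mx 1 w) = RtoC ((m + dot a w) / 2).
Proof.
rewrite tr_mulmx2 !pauli_mx00 !pauli_mx01 !pauli_mx10 !pauli_mx11 dot3E.
by apply: complexP => /=; field.
Qed.

Lemma pauli_mx_form m a (u : 'cV[C]_2) :
  (adjmx u *m pauli_mx m a *m u) 0 0 =
  RtoC (hform2 ((m + a 0 2) / 2) ((m - a 0 2) / 2) (a 0 0 / 2) (- (a 0 1 / 2))
         (complex.Re (u 0 0)) (complex.Im (u 0 0)) (complex.Re (u 1 0)) (complex.Im (u 1 0))).
Proof.
rewrite !mxE !big_ord_recr !big_ord0 /= !add0r !mxE !big_ord_recr !big_ord0 /= !add0r !adjmxE.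
have -> : widen_ord (leqnSn 1) ord_max = 0 :> 'I_2 by exact: val_inj.
have -> : (ord_max : 'I_2) = 1 by exact: val_inj.
rewrite pauli_mx00 pauli_mx01 pauli_mx10 pauli_mx11.
case: (u 0 0) => x1 x2; case: (u 1 0) => y1 y2; rewrite !conjc_Complex /hform2.
by apply: complexP => /=; ring.
Qed.

Lemma psd_pauli_mxP m a : psd (pauli_mx m a) <-> vnorm a <= m.
Proof.
rewrite vnorm_le dot3E; split => [[_ form_ge0]|/andP[m_ge0 a_le]].
  have /hform2_ge0P[p_ge0 s_ge0 q_le] : forall x1 x2 y1 y2,
      0 <= hform2 ((m + a 0 2) / 2) ((m - a 0 2) / 2) (a 0 0 / 2) (- (a 0 1 / 2)) x1 x2 y1 y2.
    move=> x1 x2 y1 y2.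
    have := form_ge0 (\col_i [:: Complex x1 x2; Complex y1 y2]`_i).
    by rewrite pauli_mx_form !mxE ler0c.
  by apply/andP; split; nra.
have /hform2_ge0P form_ge0 : [/\ 0 <= (m + a 0 2) / 2, 0 <= (m - a 0 2) / 2 &
    (a 0 0 / 2) ^+ 2 + (- (a 0 1 / 2)) ^+ 2 <= (m + a 0 2) / 2 * ((m - a 0 2) / 2)].
  by split; nra.
by split=> [|u]; rewrite ?pauli_mx_form ?ler0c ?form_ge0 ?adjmx_pauli_mx.
Qed.

Lemma psd_pauli M :
  psd M -> M = pauli_mx (htrace M) (hbloch M) /\ vnorm (hbloch M) <= htrace M.
Proof.
move=> psdM; have eM := hermitian_pauli_mx psdM.1.
by split => //; apply/psd_pauli_mxP; rewrite -eM.
Qed.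

Lemma povm_pauli N (M : 'I_N -> 'M[C]_2) :
  povm M -> \sum_x htrace (M x) = 2 /\ \sum_x hbloch (M x) = 0.
Proof.
case=> psdM sumM.
have E : pauli_mx (\sum_x htrace (M x)) (\sum_x hbloch (M x)) = pauli_mx 2 0.
  rewrite -pauli_mx_sum pauli_mx_id -sumM; apply: eq_bigr => x _.
  by rewrite -(psd_pauli (psdM x)).1.
by split; [have := congr1 htrace E; rewrite !htrace_pauli_mx
          | have := congr1 hbloch E; rewrite !hbloch_pauli_mx].
Qed.

Lemma success_pauli N (m : 'I_N -> R) (a v : 'I_N -> 'rV[R]_3) :
  success (fun x => pauli_mx (m x) (a x)) v =
  RtoC (N%:R^-1 * \sum_x (m x + dot (a x) (v x)) / 2).
Proof.
rewrite /success; under eq_bigr do rewrite bloch_stateE tr_pauli_mx.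
have RtoCE (k : R) : RtoC k = real_complex R k by [].
under eq_bigr do rewrite RtoCE.
by rewrite RtoCE -rmorph_sum -rmorphM.
Qed.
End PauliMatrices.

Lemma enorm_vnorm (R : realType) (u : 'rV[R]_3) : enorm u = vnorm u.
Proof. by rewrite /enorm /vnorm /dot; under eq_bigr do rewrite expr2. Qed.

Section GuessingProbability.
Variables (R : realType) (N : nat) (v : 'I_N -> 'rV[R]_3).
Variables (mu : 'I_N -> R) (c : 'rV[R]_3) (r : R).
Hypothesis cert : minball_cert v mu c r.

Lemma success_le_minball M : povm M -> success M v <= RtoC (N%:R^-1 * (1 + r)).
Proof.
move=> povmM; have [htrace_sum hbloch_sum] := povm_pauli povmM.
have -> : M = fun x => pauli_mx (htrace (M x)) (hbloch (M x)).
  by apply: funext => x; exact: (psd_pauli (povmM.1 x)).1.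
rewrite success_pauli lecR ler_wpM2l ?invr_ge0 ?ler0n //.
have recentre : \sum_x dot (hbloch (M x)) (v x) = \sum_x dot (hbloch (M x)) (v x - c).
  under [RHS]eq_bigr do rewrite dotBr.
  by rewrite sumrB -dot_suml hbloch_sum dot0l subr0.
rewrite -mulr_suml big_split /= htrace_sum recentre.
rewrite ler_pdivrMr // mulrDl mul1r lerD2l -htrace_sum mulr_sumr.
apply: ler_sum => x _; apply: (le_trans (dot_le_vnorm _ _)); rewrite mulrC.
have [_ trace_ge] := psd_pauli (povmM.1 x); case: cert => _ _ _ le_r _.
by apply: ler_pM; rewrite ?vnorm_ge0.
Qed.

(* At [r = 0] all points coincide and [/ r] returns the junk value [0]: the
   measurement is then [mu x] times the identity. *)
Definition minball_povm x : 'M[complex R]_2 :=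
  pauli_mx (2 * mu x) ((2 * mu x / r) *: (v x - c)).

Lemma povm_minball : povm minball_povm.
Proof.
case: (cert) => mu_ge0 mu1 _ le_r _; split.
  move=> x; have r_ge0 : 0 <= r := le_trans (vnorm_ge0 _) (le_r x).
  apply/psd_pauli_mxP; rewrite vnormZ ger0_norm ?divr_ge0 ?mulr_ge0 ?mu_ge0 //.
  have [->|r_neq0] := eqVneq r 0; first by rewrite invr0 mulr0 mul0r mulr_ge0 ?mu_ge0.
  rewrite -(mulrA (2 * mu x)) ler_piMr ?mulr_ge0 ?mu_ge0 // mulrC ler_pdivrMr ?mul1r //.
  by rewrite lt_def r_neq0.
rewrite /minball_povm pauli_mx_sum -pauli_mx_id -mulr_sumr mu1 mulr1.
under eq_bigr do rewrite mulrAC -scalerA.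
by rewrite -scaler_sumr (minball_balanced cert) scaler0.
Qed.

Lemma success_minball : success minball_povm v = RtoC (N%:R^-1 * (1 + r)).
Proof.
rewrite success_pauli; congr (RtoC (_ * _)).
have termE x : (2 * mu x + dot ((2 * mu x / r) *: (v x - c)) (v x)) / 2 =
    mu x + r^-1 * (mu x * dot (v x - c) (v x)).
  have halve (a b : R) : (2 * a + 2 * b) / 2 = a + b by field.
  by rewrite dotZl -!mulrA halve mulrCA.
under eq_bigr do rewrite termE.
case: (cert) => _ mu1 _ _ _.
rewrite big_split /= -mulr_sumr mu1 (minball_moment cert).
by have [->|r_neq0] := eqVneq r 0; [rewrite invr0 mul0r | rewrite expr2 mulKf].
Qed.

Lemma fit_scalesP l : fit_scales v l <-> 0 <= l /\ l * r <= 1.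
Proof.
split=> [[l_ge0 [g [g_iso fit]]]|[l_ge0 lr_le1]].
  split=> //; apply: (minball_scale_le cert (g := g)).
  - by move=> u w; rewrite -!enorm_vnorm.
  - by move=> x; rewrite -enorm_vnorm.
split=> //; exists (fun z => z - l *: c); split.
  by move=> u w; rewrite opprB addrA subrK.
case: cert => _ _ _ le_r _ x.
rewrite -scalerBr enorm_vnorm vnormZ ger0_norm //.
by apply: le_trans lr_le1; apply: ler_wpM2l.
Qed.

Lemma ratio_r_minball : (0 < N)%N -> ratio_r v = N%:R^-1 * r.
Proof.
move=> N_gt0; have r_ge0 := minball_radius_ge0 cert N_gt0.
have [r0|r_neq0] := eqVneq r 0.
  rewrite /ratio_r; suff -> : lambda_star v = +oo%E by rewrite r0 mulr0.
  apply: eq_infty => l; apply: (@le_trans _ _ (Num.max l 0)%:E).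
    by rewrite lee_fin le_max lexx.
  apply: ereal_sup_ubound; exists (Num.max l 0) => //.
  by apply/fit_scalesP; rewrite r0 mulr0 le_max lexx orbT.
have r_gt0 : 0 < r by rewrite lt_def r_neq0.
rewrite /ratio_r; suff -> : lambda_star v = (r^-1)%:E by rewrite invfM invrK.
apply/eqP; rewrite eq_le; apply/andP; split.
  apply: ge_ereal_sup => _ [l /fit_scalesP[_ lr_le1] <-].
  by rewrite lee_fin -[r^-1]mul1r ler_pdivlMr.
by apply: ereal_sup_ubound; exists r^-1 => //; apply/fit_scalesP; rewrite invr_ge0 mulVf.
Qed.

End GuessingProbability.

Theorem lemma7 (R : realType) (N : nat) (hN : (0 < N)%N)
  (v : 'I_N -> 'rV[R]_3) (hv : forall x, enorm (v x) <= 1) :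
  is_Pguess v (N%:R^-1 + ratio_r v).
Proof.
have [mu [c [r cert]]] := minball_exists v hN.
rewrite (ratio_r_minball cert hN) -{1}[N%:R^-1]mulr1 -mulrDr.
split; last exact: success_le_minball cert.
exists (minball_povm v mu c r).
by split; [exact: povm_minball cert | exact: success_minball cert].
Qed.
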